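(* Let $\Theta = \{l_1:\mathtt{qbit}, l_2:\mathtt{qbit}\}$ and $\theta = (l_1,l_2)$. Let $\mathscr{C}$ be a quantum circuit with holes such that $l:\mathtt{bit}, \Theta \rhd \mathscr{C} \rhd \Theta$ is derivable, and let $\mathscr{D}$ be the circuit with holes $\mathtt{if}\ l\ \mathtt{then}\ ([-];\{-\})\ \mathtt{else}\ (\{-\};[-])$. If $\mathscr{C} \approx \mathscr{D}$, then either the hole $[-]$ or the hole $\{-\}$ appears more than once in $\mathscr{C}$.
   Context: Circuits: fix an infinite set of labels; base types $\mathtt{bit},\mathtt{qbit}$; the operation set $\mathbb{Q}$ consists of $\mathtt{zero},\mathtt{one}:()\to(\mathtt{bit})$, $\mathtt{discard}:(\mathtt{bit})\to()$, $\mathtt{new}:(\mathtt{bit})\to(\mathtt{qbit})$, $\mathtt{meas}:(\mathtt{qbit})\to(\mathtt{bit})$, $H,S,T:(\mathtt{qbit})\to(\mathtt{qbit})$, $\mathrm{CNOT}:(\mathtt{qbit},\mathtt{qbit})\to(\mathtt{qbit},\mathtt{qbit})$. Circuits with holes are given by $\mathscr{C},\mathscr{D},\mathscr{E} ::= [-] \mid \{-\} \mid c^{\overline{l}}_{\overline{r}} \mid \mathscr{C};\mathscr{D} \mid \mathtt{if}\ l\ \mathtt{then}\ \mathscr{D}\ \mathtt{else}\ \mathscr{E}$ with $c\in\mathbb{Q}$ (gate $c$ applied to input wires $\overline{l}$ producing output wires $\overline{r}$). Environments are finite sets of (label : base type), each label at most once. Typing $\Gamma \rhd \mathscr{C} \rhd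 \Delta$ is derived by: $\Theta \rhd [-] \rhd \Theta$ and $\Theta \rhd \{-\} \rhd \Theta$ (with $\Theta$ as in the claim); for $c$ with input types $(B_1..B_n)$, output types $(B'_1..B'_m)$: $\Xi, l_1:B_1,\dots,l_n:B_n \rhd c^{(l_1..l_n)}_{(r_1..r_m)} \rhd \Xi, r_1:B'_1,\dots,r_m:B'_m$ for any environment $\Xi$; from $\Gamma\rhd\mathscr{C}\rhd\Psi$ and $\Psi\rhd\mathscr{D}\rhd\Delta$ infer $\Gamma\rhd\mathscr{C};\mathscr{D}\rhd\Delta$; from $\Gamma\rhd\mathscr{D}\rhd\Delta$ and $\Gamma\rhd\mathscr{E}\rhd\Delta$ infer $\Gamma,l:\mathtt{bit}\rhd \mathtt{if}\ l\ \mathtt{then}\ \mathscr{D}\ \mathtt{else}\ \mathscr{E}\rhd\Delta$. For circuits $C, D$ (possibly using additional gates), $\mathscr{C}(C,D)$ denotes the result of replacing $[-]$ by $C$ and $\{-\}$ by $D$. For any $4\times 4$ unitary matrix $U$, $U^\theta_\theta$ denotes the circuit applying $U$ as a gate to the wires $(l_1,l_2)$, with $\Theta \rhd U^\theta_\theta \rhd \Theta$. Semantics (category CPM): objects are tuples $(n_1,\dots,n_k)$ of positive integers with $V_{(n_1..n_k)}=\prod_i \mathbb{C}^{n_i\times n_i}$, morphisms are completely positive linear maps, tensor $(n_i)\otimes(m_j)=(n_im_j)_{i,j}$, unit $(1)$. $[\![\mathtt{bit}]\!]=(1,1)$, $[\![\mathtt{qbit}]\!]=(2)$, environments are interpreted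 as tensor products ordered by a fixed linear order on labels. A unitary gate $U$ is interpreted as $A\mapsto UAU^\dagger$; $[\![\mathtt{one}]\!](x)=(x,0)$, $[\![\mathtt{zero}]\!](x)=(0,x)$, $[\![\mathtt{new}]\!](x,0)=x|1\rangle\langle1|$, $[\![\mathtt{new}]\!](0,x)=x|0\rangle\langle0|$, $[\![\mathtt{meas}]\!]\begin{pmatrix}a&b\\c&d\end{pmatrix}=(a,d)$, $[\![\mathtt{discard}]\!](a,b)=a+b$. $[\![c^{\overline l}_{\overline r}]\!]$ is $\mathrm{id}_{[\![\Xi]\!]}\otimes[\![c]\!]$ up to symmetries, $[\![C;D]\!]=[\![D]\!]\circ[\![C]\!]$, and identifying $[\![\Gamma,l:\mathtt{bit}]\!]\cong[\![\Gamma]\!]\times[\![\Gamma]\!]$, $[\![\mathtt{if}\ l\ \mathtt{then}\ C\ \mathtt{else}\ D]\!](\vec A,\vec B)=[\![C]\!](\vec A)+[\![D]\!](\vec B)$. For circuits with holes $\Gamma\rhd\mathscr{C}\rhd\Delta$ and $\Gamma\rhd\mathscr{D}\rhd\Delta$, write $\mathscr{C}\approx\mathscr{D}$ if for all $4\times4$ unitary matrices $U,V$, $[\![\mathscr{C}(U^\theta_\theta,V^\theta_\theta)]\!] = [\![\mathscr{D}(U^\theta_\theta,V^\theta_\theta)]\!]$. *)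

From mathcomp Require Import all_boot all_algebra.
From mathcomp Require Import complex.
From mathcomp Require Import Rstruct.
Set Implicit Arguments. Unset Strict Implicit. Unset Printing Implicit Defensive.
Import GRing.Theory Num.Theory.
Local Open Scope ring_scope.

Definition C : numClosedFieldType := Rdefinitions.R[i].

(** Labels are natural numbers (an infinite set, linearly ordered). *)
Inductive btype := Bit | Qbit.

Inductive gate := Zero | One | Discard | New | Meas | Hg | Sg | Tg | CNOT.

Definition gin (g : gate) : seq btype :=
  match g with
  | Zero | One => [::]
  | Discard | New => [:: Bit]
  | Meas | Hg | Sg | Tg => [:: Qbit]
  | CNOT => [:: Qbit; Qbit]
  end.

Definition gout (g : gate) : seq btype :=
  match g with
  | Zero | One | Meas => [:: Bit]
  | Discard => [::]
  | New | Hg | Sg | Tg => [:: Qbit]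
  | CNOT => [:: Qbit; Qbit]
  end.

(** Circuits with holes.  [UGate U x y] is the additional gate applying the
    4x4 matrix U to the wires (x, y) (used to fill the holes). *)
Inductive circ :=
  | Hole1
  | Hole2
  | Gate of gate & seq nat & seq nat
  | Seq of circ & circ
  | If of nat & circ & circ
  | UGate of 'M[C]_4 & nat & nat.

Fixpoint fill (K A B : circ) : circ :=
  match K with
  | Hole1 => A
  | Hole2 => B
  | Seq K1 K2 => Seq (fill K1 A B) (fill K2 A B)
  | If l K1 K2 => If l (fill K1 A B) (fill K2 A B)
  | _ => K
  end.

Fixpoint count1 (K : circ) : nat :=
  match K with
  | Hole1 => 1
  | Seq K1 K2 | If _ K1 K2 => count1 K1 + count1 K2
  | _ => 0
  end%N.

Fixpoint count2 (K : circ) : nat :=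
  match K with
  | Hole2 => 1
  | Seq K1 K2 | If _ K1 K2 => count2 K1 + count2 K2
  | _ => 0
  end%N.

(** Environments: partial maps from labels to base types (finite ones are
    required where the typing rules introduce a fresh environment). *)
Definition env := nat -> option btype.

Definition env_finite (X : env) : Prop := exists n, forall x, (n <= x)%N -> X x = None.

Definition extend (X : env) (ls : seq nat) (ts : seq btype) : env :=
  fun x => if x \in ls then Some (nth Bit ts (index x ls)) else X x.

Definition empty_env : env := fun _ => None.

Definition Theta (l1 l2 : nat) : env := extend empty_env [:: l1; l2] [:: Qbit; Qbit].

Inductive typed (l1 l2 : nat) : env -> circ -> env -> Prop :=
  | ty_hole1 G D : G =1 Theta l1 l2 -> D =1 Theta l1 l2 -> typed l1 l2 G Hole1 D
  | ty_hole2 G D : G =1 Theta l1 l2 -> D =1 Theta l1 l2 -> typed l1 l2 G Hole2 D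
  | ty_gate g ins outs (X G D : env) :
      env_finite X -> uniq ins -> uniq outs ->
      size ins = size (gin g) -> size outs = size (gout g) ->
      (forall x, x \in ins -> X x = None) ->
      (forall x, x \in outs -> X x = None) ->
      G =1 extend X ins (gin g) -> D =1 extend X outs (gout g) ->
      typed l1 l2 G (Gate g ins outs) D
  | ty_seq G P D K1 K2 :
      typed l1 l2 G K1 P -> typed l1 l2 P K2 D -> typed l1 l2 G (Seq K1 K2) D
  | ty_if G G' D l K1 K2 :
      typed l1 l2 G' K1 D -> typed l1 l2 G' K2 D -> G' l = None ->
      G =1 extend G' [:: l] [:: Bit] -> typed l1 l2 G (If l K1 K2) D.

(** An element of V_[[G]] (a tuple of 2^#bits matrices of size
    2^#qbits) is represented by its coordinates:
      f c p k  = entry (p, k) of the block indexed by the classical valuation c,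
    where c gives the values of the bit wires (true = first component, i.e. the
    value produced by [one]) and p, k : nat -> bool give the row/column
    computational-basis indices of the qbit wires (true = |1>).
    Such an f represents an element of V_[[G]] when it only depends on the
    coordinates of the labels of G (see [supported]). *)
Definition st := (nat -> bool) -> (nat -> bool) -> (nat -> bool) -> C.

Definition upd (v : nat -> bool) (x : nat) (b : bool) : nat -> bool :=
  fun y => if y == x then b else v y.

Definition supported (G : env) (f : st) : Prop :=
  forall c c' p p' k k',
    (forall x, G x = Some Bit -> c x = c' x) ->
    (forall x, G x = Some Qbit -> p x = p' x /\ k x = k' x) ->
    f c p k = f c' p' k'.

(** A -> u A u^dagger, one-qubit gate from wire l to wire r. *)
Definition app1 (u : bool -> bool -> C) (l r : nat) (f : st) : st :=
  fun c p k => \sum_(a : bool) \sum_(b : bool)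
    u (p r) a * f c (upd p l a) (upd k l b) * (u (k r) b)^*.

(** A -> u A u^dagger, two-qubit gate from wires (l1,l2) to wires (r1,r2);
    the first wire is the first tensor factor. *)
Definition app2 (u : bool * bool -> bool * bool -> C) (l1 l2 r1 r2 : nat)
    (f : st) : st :=
  fun c p k => \sum_(a : bool * bool) \sum_(b : bool * bool)
    u (p r1, p r2) a * f c (upd (upd p l1 a.1) l2 a.2) (upd (upd k l1 b.1) l2 b.2)
      * (u (k r1, k r2) b)^*.

Definition sqrt2 : C := sqrtC 2.

Definition Hmat (a b : bool) : C := (if a && b then -1 else 1) / sqrt2.
Definition Smat (a b : bool) : C := if a == b then (if a then 'i else 1) else 0.
Definition Tmat (a b : bool) : C :=
  if a == b then (if a then (1 + 'i) / sqrt2 else 1) else 0.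
(* CNOT, control = first wire *)
Definition CNOTmat (a b : bool * bool) : C :=
  ((a.1 == b.1) && (a.2 == (b.2 (+) b.1)))%:R.

Definition sem_gate (g : gate) (ins outs : seq nat) (f : st) : st :=
  let l1 := nth 0%N ins 0 in let l2 := nth 0%N ins 1 in
  let r1 := nth 0%N outs 0 in let r2 := nth 0%N outs 1 in
  match g with
  | Zero => fun c p k => if c r1 then 0 else f c p k
  | One => fun c p k => if c r1 then f c p k else 0
  | Discard => fun c p k => f (upd c l1 true) p k + f (upd c l1 false) p k
  | New => fun c p k => if p r1 == k r1 then f (upd c l1 (p r1)) p k else 0
  | Meas => fun c p k => f c (upd p l1 (c r1)) (upd k l1 (c r1))
  | Hg => app1 Hmat l1 r1 f
  | Sg => app1 Smat l1 r1 f
  | Tg => app1 Tmat l1 r1 f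
  | CNOT => app2 CNOTmat l1 l2 r1 r2 f
  end.

(** Index of the basis vector |a1 a2> (a1 most significant). *)
Definition idx4 (a : bool * bool) : 'I_4 := inord ((nat_of_bool a.1).*2 + a.2)%N.

Fixpoint sem (K : circ) (f : st) : st :=
  match K with
  | Hole1 | Hole2 => f
  | Gate g ins outs => sem_gate g ins outs f
  | Seq K1 K2 => sem K2 (sem K1 f)
  | If l K1 K2 => fun c p k =>
      sem K1 (fun c' p' k' => f (upd c' l true) p' k') c p k
      + sem K2 (fun c' p' k' => f (upd c' l false) p' k') c p k
  | UGate U x y => app2 (fun a b => U (idx4 a) (idx4 b)) x y x y f
  end.

Definition unitary (U : 'M[C]_4) : Prop := U *m (map_mx Num.conj U)^T = 1%:M.

Definition approx (l1 l2 : nat) (G : env) (K1 K2 : circ) : Prop :=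
  forall U V : 'M[C]_4, unitary U -> unitary V ->
  forall f, supported G f -> forall c p k,
    sem (fill K1 (UGate U l1 l2) (UGate V l1 l2)) f c p k =
    sem (fill K2 (UGate U l1 l2) (UGate V l1 l2)) f c p k.

Definition Dswitch (l : nat) : circ := If l (Seq Hole1 Hole2) (Seq Hole2 Hole1).

From mathcomp Require Import all_boot all_algebra.
From mathcomp Require Import complex.
From mathcomp Require Import Rstruct.
From mathcomp Require Import ring zify.
From Stdlib Require Import FunctionalExtensionality.
Set Implicit Arguments. Unset Strict Implicit. Unset Printing Implicit Defensive.
Import GRing.Theory Num.Theory.
Local Open Scope ring_scope.
Local Open Scope sesquilinear_scope.

(* Suppose each hole occurs at most once.  Whichever hole is reached first,
   say [-], sees a state that does not depend on the fillings, so the output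
   depends on the unitary U in [-] only through U rho U^dagger for a single
   hermitian two-qubit state rho.  By the spectral theorem rho is fixed by a
   unitary W that still moves some pure state V|00>, so filling [-] with 1 or
   with W cannot change the output of the circuit; but on the branch of the
   switch that runs {-} (filled with V) before [-], started in |00>, these two
   fillings produce V|00><00|V^dagger and W V|00><00|V^dagger W^dagger. *)

Section CommutingUnitary.
Variables (F : numClosedFieldType) (n : nat).
Implicit Types A B M P S V W X : 'M[F]_n.+2.

Lemma adjmxM m p q (A : 'M[F]_(m, p)) (B : 'M[F]_(p, q)) :
  (A *m B)^t* = B^t* *m A^t*.
Proof. by rewrite trmx_mul map_mxM. Qed.

Lemma adj_conjmx P A : (P^t* *m A *m P)^t* = P^t* *m A^t* *m P.
Proof. by rewrite !adjmxM trmxCK mulmxA. Qed.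

Lemma conjmxM P A B : P \is unitarymx ->
  (P^t* *m A *m P) *m (P^t* *m B *m P) = P^t* *m (A *m B) *m P.
Proof. by move=> uP; rewrite !mulmxA mulmxtVK // !mulmxA. Qed.

Lemma conjmx_unitary_inj P A B : P \is unitarymx ->
  P^t* *m A *m P = P^t* *m B *m P -> A = B.
Proof.
move=> uP /(congr1 (fun X => P *m X *m P^t*)) /=.
by rewrite !mulmxA (unitarymxP uP) !mul1mx !mulmxtVK.
Qed.

Lemma pure_state_entry S i j :
  (S^t* *m delta_mx 0 0 *m S) i j = (S 0 i)^* * S 0 j.
Proof.
by rewrite -(mul_delta_mx (0 : 'I_1)) mulmxA -mulmxA -rowE -colE mxE big_ord1 !mxE.
Qed.

(* Gram-Schmidt applied to the all-ones matrix: its first row is a multiple of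
   the all-ones vector. *)
Lemma unitarymx_row0_neq0 : exists2 S : 'M[F]_n.+2, S \is unitarymx & forall j, S 0 j != 0.
Proof.
pose A : 'M[F]_n.+2 := const_mx 1.
exists (schmidt A); first exact: schmidt_unitarymx.
have := row_schmidt_sub A 0; rewrite (big_pred1 0) => [|k]; last by rewrite leqn0.
rewrite genmxE => /submxP[c eA] j.
have := congr1 (fun v : 'rV[F]_n.+2 => v 0 j) eA; rewrite !mxE big_ord1 !mxE.
by move/eqP; apply: contraTneq => ->; rewrite mulr0 oner_eq0.
Qed.

Definition flip1 : 'M[F]_n.+2 := diag_mx (\row_i (if i == 1 then -1 else 1)).

Lemma flip1_unitary : flip1 \is unitarymx.
Proof.
apply/unitarymxP; rewrite tr_diag_mx map_diag_mx mulmx_diag.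
apply/matrixP => i j; rewrite !mxE.
by case: (i == 1); rewrite ?rmorphN rmorph1 ?mulrNN mul1r.
Qed.

Lemma flip1_conjmx_diag d : flip1 *m diag_mx d *m flip1^t* = diag_mx d.
Proof. by rewrite diag_mxC -mulmxA (unitarymxP flip1_unitary) mulmx1. Qed.

Lemma flip1_conjmx01 X : (flip1 *m X *m flip1^t*) 0 1 = - X 0 1.
Proof.
rewrite tr_diag_mx map_diag_mx mul_diag_mx mul_mx_diag !mxE eqxx eq_sym oner_eq0.
by rewrite rmorphN rmorph1 mul1r mulrN1.
Qed.

(* In an eigenbasis P of M, take W = flip1 and V with a first column that
   meets both eigenvectors 0 and 1. *)
Lemma commuting_unitary_moving_pure_state M : M^t* = M ->
  exists W V, [/\ W \is unitarymx, V \is unitarymx, W *m M *m W^t* = M &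
    W *m (V *m delta_mx 0 0 *m V^t*) *m W^t* != V *m delta_mx 0 0 *m V^t*].
Proof.
move=> hM; set P := spectralmx M; have uP : P \is unitarymx := spectral_unitarymx M.
have eM : M = P^t* *m diag_mx (spectral_diag M) *m P.
  by rewrite -invmx_unitary //; apply/orthomx_spectralP/normalmxP; rewrite hM.
have [S uS S0] := unitarymx_row0_neq0.
exists (P^t* *m flip1 *m P), (P^t* *m S^t*); split.
- by rewrite !mul_unitarymx ?trmxC_unitary ?flip1_unitary.
- by rewrite mul_unitarymx ?trmxC_unitary.
- by rewrite adj_conjmx {1}eM !conjmxM ?flip1_conjmx_diag -?eM.
have -> : P^t* *m S^t* *m delta_mx 0 0 *m (P^t* *m S^t*)^t* =
          P^t* *m (S^t* *m delta_mx 0 0 *m S) *m P.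
  by rewrite adjmxM !trmxCK !mulmxA.
rewrite adj_conjmx !conjmxM //; apply/eqP => /(conjmx_unitary_inj uP).
move/matrixP/(_ 0 1)/eqP; rewrite flip1_conjmx01 pure_state_entry.
by rewrite eq_sym -subr_eq0 opprK -mulr2n mulrn_eq0 mulf_eq0 conjC_eq0 !(negbTE (S0 _)).
Qed.

End CommutingUnitary.

Lemma unitarymx_unitary (U : 'M[C]_4) : U \is unitarymx -> unitary U.
Proof. by move/unitarymxP; rewrite /unitary map_trmx. Qed.

Fixpoint swap_holes (K : circ) : circ :=
  match K with
  | Hole1 => Hole2
  | Hole2 => Hole1
  | Seq K1 K2 => Seq (swap_holes K1) (swap_holes K2)
  | If l K1 K2 => If l (swap_holes K1) (swap_holes K2)
  | K => K
  end.

Lemma fill_swap_holes K A B : fill (swap_holes K) A B = fill K B A.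
Proof. by elim: K => //= [K1 IH1 K2 IH2|x K1 IH1 K2 IH2]; rewrite IH1 IH2. Qed.

Lemma count1_swap_holes K : count1 (swap_holes K) = count2 K.
Proof. by elim: K => //= [K1 IH1 K2 IH2|x K1 IH1 K2 IH2]; rewrite IH1 IH2. Qed.

Lemma count2_swap_holes K : count2 (swap_holes K) = count1 K.
Proof. by elim: K => //= [K1 IH1 K2 IH2|x K1 IH1 K2 IH2]; rewrite IH1 IH2. Qed.

Lemma typed_swap_holes l1 l2 G K D :
  typed l1 l2 G K D -> typed l1 l2 G (swap_holes K) D.
Proof.
elim=> /= *; [exact: ty_hole2 | exact: ty_hole1 | by econstructor; eauto ..].
Qed.

Lemma fill_count1_eq0 K A A' B : count1 K = 0%N -> fill K A B = fill K A' B.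
Proof.
elim: K => //= [K1 IH1 K2 IH2|x K1 IH1 K2 IH2] /eqP;
  by rewrite addn_eq0 => /andP[/eqP h1 /eqP h2]; rewrite IH1 // IH2.
Qed.

Lemma fill_count2_eq0 K A B B' : count2 K = 0%N -> fill K A B = fill K A B'.
Proof.
elim: K => //= [K1 IH1 K2 IH2|x K1 IH1 K2 IH2] /eqP;
  by rewrite addn_eq0 => /andP[/eqP h1 /eqP h2]; rewrite IH1 // IH2.
Qed.

Definition herm (f : st) := forall c p k, f c k p = (f c p k)^*.

Lemma herm_app1 u x r f : herm f -> herm (app1 u x r f).
Proof.
move=> hf c p k; rewrite /app1 rmorph_sum exchange_big; apply: eq_bigr => a _.
rewrite rmorph_sum; apply: eq_bigr => b _.
by rewrite !rmorphM /= (hf c (upd k x b)) !conjCK; ring.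
Qed.

Lemma herm_app2 u x y r1 r2 f : herm f -> herm (app2 u x y r1 r2 f).
Proof.
move=> hf c p k; rewrite /app2 rmorph_sum exchange_big; apply: eq_bigr => a _.
rewrite rmorph_sum; apply: eq_bigr => b _.
by rewrite !rmorphM /= (hf c (upd (upd k x b.1) y b.2)) !conjCK; ring.
Qed.

Lemma herm_sem K f : herm f -> herm (sem K f).
Proof.
elim: K f => //= [g ins outs|K1 IH1 K2 IH2|x K1 IH1 K2 IH2|U x y] f hf.
- case: g => /= c p k; try exact: herm_app1; try exact: herm_app2.
  + by case: (c _); rewrite ?conjC0 // hf.
  + by case: (c _); rewrite ?conjC0 // hf.
  + by rewrite rmorphD (hf (upd c _ true)) (hf (upd c _ false)).
  + by rewrite eq_sym; case: eqP => [->|_]; rewrite ?conjC0 // hf.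
  + by rewrite hf.
- exact/IH2/IH1.
- move=> c p k; rewrite rmorphD.
  by rewrite (IH1 _ (fun c p k => hf _ p k)) (IH2 _ (fun c p k => hf _ p k)).
- exact: herm_app2.
Qed.

Lemma extend1 X a t x : extend X [:: a] [:: t] x = if x == a then Some t else X x.
Proof. by rewrite /extend inE; case: (x =P a) => [->|] //=; rewrite eqxx. Qed.

Lemma extend2 X a b t x :
  extend X [:: a; b] [:: t; t] x = if (x == a) || (x == b) then Some t else X x.
Proof.
rewrite /extend !inE; case: (x =P a) => [->|ne] /=; first by rewrite eqxx.
by case: (x =P b) => [->|] //=; rewrite eqxx; case: (_ == _).
Qed.

Lemma ThetaE l1 l2 x :
  Theta l1 l2 x = if (x == l1) || (x == l2) then Some Qbit else None.
Proof. exact: extend2. Qed.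

Section Support.
Variables (X D : env) (outs : seq nat) (ts : seq btype).
Hypotheses (hD : D =1 extend X outs ts) (hout : forall x, x \in outs -> X x = None).

Lemma agree_bit_extend (c c' : nat -> bool) :
  (forall x, D x = Some Bit -> c x = c' x) -> forall x, X x = Some Bit -> c x = c' x.
Proof.
move=> hc x hx; apply: hc; rewrite (hD x) /extend.
by case: ifP => [/hout|//]; rewrite hx.
Qed.

Lemma agree_qbit_extend (p p' k k' : nat -> bool) :
  (forall x, D x = Some Qbit -> p x = p' x /\ k x = k' x) ->
  forall x, X x = Some Qbit -> p x = p' x /\ k x = k' x.
Proof.
move=> hq x hx; apply: hq; rewrite (hD x) /extend.
by case: ifP => [/hout|//]; rewrite hx.
Qed.

End Support.

Lemma supp_app1 u a r (X G D : env) f :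
  G =1 extend X [:: a] [:: Qbit] -> D =1 extend X [:: r] [:: Qbit] ->
  (forall x, x \in [:: r] -> X x = None) ->
  supported G f -> supported D (app1 u a r f).
Proof.
move=> hG hD hout hf c c' p p' k k' hc hq.
have hcX := agree_bit_extend hD hout hc; have hqX := agree_qbit_extend hD hout hq.
rewrite /app1; have [-> ->] : p r = p' r /\ k r = k' r by apply: hq; rewrite hD extend1 eqxx.
apply: eq_bigr => i _; apply: eq_bigr => j _.
congr (_ * _ * _); apply: hf => x; rewrite hG extend1 /upd.
- by case: ifP => // _; apply: hcX.
- by case: (x =P a) => // _; apply: hqX.
Qed.

Lemma supp_app2 u a1 a2 r1 r2 (X G D : env) f :
  G =1 extend X [:: a1; a2] [:: Qbit; Qbit] ->
  D =1 extend X [:: r1; r2] [:: Qbit; Qbit] ->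
  (forall x, x \in [:: r1; r2] -> X x = None) ->
  supported G f -> supported D (app2 u a1 a2 r1 r2 f).
Proof.
move=> hG hD hout hf c c' p p' k k' hc hq.
have hcX := agree_bit_extend hD hout hc; have hqX := agree_qbit_extend hD hout hq.
rewrite /app2; have [-> ->] : p r1 = p' r1 /\ k r1 = k' r1 by apply: hq; rewrite hD extend2 eqxx.
have [-> ->] : p r2 = p' r2 /\ k r2 = k' r2.
  by apply: hq; rewrite hD extend2 eqxx orbT.
apply: eq_bigr => i _; apply: eq_bigr => j _.
congr (_ * _ * _); apply: hf => x; rewrite hG extend2 /upd.
- by case: ifP => // _; apply: hcX.
- by case: (x =P a2) => // _; case: (x =P a1) => //= _; apply: hqX.
Qed.

Lemma supp_gate g ins outs (X G D : env) f :
  size ins = size (gin g) -> size outs = size (gout g) ->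
  (forall x, x \in outs -> X x = None) ->
  G =1 extend X ins (gin g) -> D =1 extend X outs (gout g) ->
  supported G f -> supported D (sem_gate g ins outs f).
Proof.
move=> hsi hso hout hG hD hf.
case: g hsi hso hG hD => /=;
  case: ins => [|a [|a2 [|? ?]]] //= _;
  case: outs hout => [|r [|r2 [|? ?]]] //= hout _ hG hD;
  try exact: (supp_app1 _ hG hD hout hf);
  try exact: (supp_app2 _ hG hD hout hf);
  move=> c c' p p' k k' hc hq;
  have hcX := agree_bit_extend hD hout hc; have hqX := agree_qbit_extend hD hout hq.
- have -> : c r = c' r by apply: hc; rewrite hD extend1 eqxx.
  by case: (c' r) => //; apply: hf => x; rewrite hG; [apply: hcX | apply: hqX].
- have -> : c r = c' r by apply: hc; rewrite hD extend1 eqxx.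
  by case: (c' r) => //; apply: hf => x; rewrite hG; [apply: hcX | apply: hqX].
- congr (_ + _); apply: hf => x; rewrite hG extend1 /upd;
    case: (x =P a) => //= _; by [apply: hcX | apply: hqX].
- have [-> ->] : p r = p' r /\ k r = k' r by apply: hq; rewrite hD extend1 eqxx.
  case: ifP => // _; apply: hf => x; rewrite hG extend1 /upd;
    case: (x =P a) => //= _; by [apply: hcX | apply: hqX].
- have -> : c r = c' r by apply: hc; rewrite hD extend1 eqxx.
  apply: hf => x; rewrite hG extend1 /upd;
    case: (x =P a) => //= _; by [apply: hcX | apply: hqX].
Qed.

Lemma supp_upd (G G' : env) x b f : G =1 extend G' [:: x] [:: Bit] ->
  supported G f -> supported G' (fun c p k => f (upd c x b) p k).
Proof.
move=> hG hf d d' q q' m m' hd hm; apply: hf => y; rewrite hG extend1 /upd.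
- by case: (y =P x) => // _; apply: hd.
- by case: (y =P x) => // _; apply: hm.
Qed.

Lemma supp_sem l1 l2 G K D U V f :
  typed l1 l2 G K D -> supported G f ->
  supported D (sem (fill K (UGate U l1 l2) (UGate V l1 l2)) f).
Proof.
move=> ty; elim: ty f => /= {G K D}.
- by move=> G D hG hD f; apply: (supp_app2 (X := empty_env) _ hG hD).
- by move=> G D hG hD f; apply: (supp_app2 (X := empty_env) _ hG hD).
- move=> g ins outs X G D _ _ _ hsi hso _ hout hG hD f.
  exact: (supp_gate hsi hso hout hG hD).
- by move=> G P D K1 K2 _ IH1 _ IH2 f hf; apply/IH2/IH1.
- move=> G G' D x K1 K2 _ IH1 _ IH2 _ hG f hf c c' p p' k k' hc hq.
  by congr (_ + _);
    [apply: (IH1 _ (supp_upd true hG hf)) | apply: (IH2 _ (supp_upd false hG hf))].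
Qed.

Section TwoQubitStates.
Variables l1 l2 : nat.
Hypothesis l12 : l1 != l2.

Definition idx (p : nat -> bool) : 'I_4 := idx4 (p l1, p l2).

Definition st_of_mx (M : 'M[C]_4) : st := fun c p k => M (idx p) (idx k).

Definition bits4 (i : 'I_4) : bool * bool := ((2 <= i)%N, odd i).

Definition basis_val (a : bool * bool) : nat -> bool :=
  fun x => if x == l1 then a.1 else if x == l2 then a.2 else false.

Lemma idx4K : cancel idx4 bits4.
Proof. by case=> [[] []]; rewrite /bits4 /idx4 /= inordK. Qed.

Lemma bits4K : cancel bits4 idx4.
Proof. by case=> [[|[|[|[|m]]]] Hm] //; apply/val_inj; rewrite /idx4 /= inordK. Qed.

Lemma idx_upd p (a : bool * bool) : idx (upd (upd p l1 a.1) l2 a.2) = idx4 a.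
Proof. by rewrite /idx /upd !eqxx (negbTE l12); case: a. Qed.

Lemma idx_basis_val a : idx (basis_val a) = idx4 a.
Proof. by rewrite /idx /basis_val eqxx eq_sym (negbTE l12) eqxx; case: a. Qed.

Lemma sum_idx4 (h : 'I_4 -> 'I_4 -> C) :
  \sum_(a : bool * bool) \sum_(b : bool * bool) h (idx4 a) (idx4 b) =
  \sum_(i < 4) \sum_(j < 4) h i j.
Proof.
have bij_idx4 : bijective idx4 by exists bits4; [exact: idx4K | exact: bits4K].
rewrite (reindex idx4) /=; last exact: onW_bij.
by apply: eq_bigr => a _; rewrite (reindex idx4) //=; apply: onW_bij.
Qed.

Lemma sem_UGate_st_of_mx U M : sem (UGate U l1 l2) (st_of_mx M) = st_of_mx (U *m M *m U^t*).
Proof.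
apply: functional_extensionality => c; apply: functional_extensionality => p;
  apply: functional_extensionality => k.
rewrite /= /app2 /st_of_mx.
under eq_bigr => a _ do under eq_bigr => b _ do rewrite !idx_upd.
rewrite (sum_idx4 (fun i j => U (idx p) i * M i j * (U (idx k) j)^*)).
rewrite !mxE; symmetry; under eq_bigr => j _ do rewrite !mxE big_distrl.
by rewrite exchange_big; apply: eq_bigr => j _; apply: eq_bigr => i _; rewrite ?mxE.
Qed.

Definition mx_of_st (s : st) : 'M[C]_4 :=
  \matrix_(i, j) s (fun _ => false) (basis_val (bits4 i)) (basis_val (bits4 j)).

Lemma mx_of_stK s : supported (Theta l1 l2) s -> s = st_of_mx (mx_of_st s).
Proof.
move=> hs; apply: functional_extensionality => c; apply: functional_extensionality => p;
  apply: functional_extensionality => k.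
rewrite /st_of_mx mxE; apply: hs => x; rewrite ThetaE; first by case: ifP.
rewrite /idx !idx4K /basis_val /=.
by case: (x =P l1) => [->|_] //=; case: (x =P l2) => [->|_].
Qed.

Lemma st_of_mx_inj : injective st_of_mx.
Proof.
move=> M M' e; apply/matrixP => i j.
have := congr1 (fun f => f (fun _ => false) (basis_val (bits4 i)) (basis_val (bits4 j))) e.
by rewrite /st_of_mx /= !idx_basis_val !bits4K.
Qed.

Lemma herm_mx_of_st s : herm s -> (mx_of_st s)^t* = mx_of_st s.
Proof. by move=> hs; apply/matrixP => i j; rewrite !mxE -hs. Qed.

End TwoQubitStates.

Section Factorization.
Variables l1 l2 : nat.

Local Notation plug K U V := (fill K (UGate U l1 l2) (UGate V l1 l2)).

Definition hole1_factors (G : env) (K : circ) : Prop :=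
  forall f, supported G f -> herm f ->
  exists s, [/\ supported (Theta l1 l2) s, herm s &
    forall U1 U2 : 'M[C]_4, sem (UGate U1 l1 l2) s = sem (UGate U2 l1 l2) s ->
    forall V, sem (plug K U1 V) f = sem (plug K U2 V) f].

Lemma factors_count1_eq0 G K : count1 K = 0%N -> hole1_factors G K.
Proof.
move=> h f _ _; exists (fun _ _ _ => 0); split=> // [c p k|U1 U2 _ V].
  by rewrite conjC0.
by rewrite (fill_count1_eq0 _ (UGate U2 l1 l2) _ h).
Qed.

Lemma factors_Hole1 G : G =1 Theta l1 l2 -> hole1_factors G Hole1.
Proof.
move=> hG f hf hh; exists f; split=> // c c' p p' k k' hc hq.
by apply: hf => x; rewrite hG; [apply: hc | apply: hq].
Qed.

Lemma factors_SeqL G K1 K2 :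
  hole1_factors G K1 -> count1 K2 = 0%N -> hole1_factors G (Seq K1 K2).
Proof.
move=> fK1 h f hf hh; have [s [ss hs eK1]] := fK1 f hf hh.
exists s; split=> // U1 U2 e V /=.
by rewrite (eK1 U1 U2 e V) (fill_count1_eq0 _ (UGate U2 l1 l2) _ h).
Qed.

Lemma factors_SeqR G P K1 K2 : typed l1 l2 G K1 P ->
  count1 K1 = 0%N -> count2 K1 = 0%N ->
  hole1_factors P K2 -> hole1_factors G (Seq K1 K2).
Proof.
move=> ty h1 h2 fK2 f hf hh.
pose g := sem (plug K1 0 0) f.
have [s [ss hs eK2]] := fK2 g (supp_sem _ _ ty hf) (herm_sem _ hh).
exists s; split=> // U1 U2 e V /=.
have plugK1 U : plug K1 U V = plug K1 0 0.
  by rewrite (fill_count1_eq0 _ (UGate 0 l1 l2) _ h1) (fill_count2_eq0 _ _ (UGate 0 l1 l2) h2).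
by rewrite !plugK1; apply: eK2.
Qed.

Lemma factors_IfL G G' x K1 K2 : G =1 extend G' [:: x] [:: Bit] ->
  hole1_factors G' K1 -> count1 K2 = 0%N -> hole1_factors G (If x K1 K2).
Proof.
move=> hG fK1 h f hf hh.
have [s [ss hs eK1]] := fK1 _ (supp_upd true hG hf) (fun c p k => hh _ p k).
exists s; split=> // U1 U2 e V /=.
by rewrite (eK1 U1 U2 e V) (fill_count1_eq0 _ (UGate U2 l1 l2) _ h).
Qed.

Lemma factors_IfR G G' x K1 K2 : G =1 extend G' [:: x] [:: Bit] ->
  count1 K1 = 0%N -> hole1_factors G' K2 -> hole1_factors G (If x K1 K2).
Proof.
move=> hG h fK2 f hf hh.
have [s [ss hs eK2]] := fK2 _ (supp_upd false hG hf) (fun c p k => hh _ p k).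
exists s; split=> // U1 U2 e V /=.
by rewrite (eK2 U1 U2 e V) (fill_count1_eq0 _ (UGate U2 l1 l2) _ h).
Qed.

Lemma factors_count2_eq0 G K D : typed l1 l2 G K D ->
  (count1 K <= 1)%N -> count2 K = 0%N -> hole1_factors G K.
Proof.
elim=> {G K D} /=.
- by move=> G D hG _ _ _; apply: factors_Hole1.
- by [].
- by move=> *; apply: factors_count1_eq0.
- move=> G P D K1 K2 ty1 IH1 _ IH2 h1 h2.
  have [e|e] : count1 K1 = 0%N \/ count1 K2 = 0%N by lia.
  + by apply: (factors_SeqR ty1) => //; [lia | apply: IH2; lia].
  + by apply: factors_SeqL => //; apply: IH1; lia.
- move=> G G' D x K1 K2 _ IH1 _ IH2 _ hG h1 h2.
  have [e|e] : count1 K2 = 0%N \/ count1 K1 = 0%N by lia.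
  + by apply: (factors_IfL hG) => //; apply: IH1; lia.
  + by apply: (factors_IfR hG) => //; apply: IH2; lia.
Qed.

Lemma factors_or_swapped G K D : typed l1 l2 G K D ->
  (count1 K <= 1)%N -> (count2 K <= 1)%N ->
  hole1_factors G K \/ hole1_factors G (swap_holes K).
Proof.
elim=> {G K D} /=.
- by move=> G D hG _ _ _; left; apply: factors_Hole1.
- by move=> G D hG _ _ _; right; apply: factors_Hole1.
- by move=> *; left; apply: factors_count1_eq0.
- move=> G P D K1 K2 ty1 IH1 _ IH2 h1 h2.
  move: (count1_swap_holes K1) (count1_swap_holes K2).
  move: (count2_swap_holes K1) (count2_swap_holes K2) => s21 s22 s11 s12.
  case: (count1 K2 =P 0%N) => e12; first case: (count2 K2 =P 0%N) => e22.
  + have [fK1|fK1] := IH1 ltac:(lia) ltac:(lia).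
    * by left; apply: factors_SeqL.
    * by right; apply: factors_SeqL => //; lia.
  + by left; apply: factors_SeqL => //; apply: (factors_count2_eq0 ty1); lia.
  case: (count2 K1 =P 0%N) => e21.
  + have [fK2|fK2] := IH2 ltac:(lia) ltac:(lia).
    * by left; apply: (factors_SeqR ty1) => //; lia.
    * by right; apply: (factors_SeqR (typed_swap_holes ty1)) => //; lia.
  + right; apply: factors_SeqL; last by lia.
    by apply: (factors_count2_eq0 (typed_swap_holes ty1)); lia.
- move=> G G' D x K1 K2 ty1 IH1 _ IH2 _ hG h1 h2.
  move: (count1_swap_holes K1) (count1_swap_holes K2).
  move: (count2_swap_holes K1) (count2_swap_holes K2) => s21 s22 s11 s12.
  case: (count1 K2 =P 0%N) => e12; first case: (count2 K2 =P 0%N) => e22.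
  + have [fK1|fK1] := IH1 ltac:(lia) ltac:(lia).
    * by left; apply: (factors_IfL hG).
    * by right; apply: (factors_IfL hG) => //; lia.
  + by left; apply: (factors_IfL hG) => //; apply: (factors_count2_eq0 ty1); lia.
  case: (count2 K1 =P 0%N) => e21.
  + have [fK2|fK2] := IH2 ltac:(lia) ltac:(lia).
    * by left; apply: (factors_IfR hG) => //; lia.
    * by right; apply: (factors_IfR hG) => //; lia.
  + right; apply: (factors_IfL hG); last by lia.
    by apply: (factors_count2_eq0 (typed_swap_holes ty1)); lia.
Qed.

End Factorization.

Section Switch.
Variables (l l1 l2 : nat) (K : circ) (b : bool).
Hypotheses (nl1 : l != l1) (nl2 : l != l2) (n12 : l1 != l2).

Local Notation G := (extend (Theta l1 l2) [:: l] [:: Bit]).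
Local Notation UG U := (UGate U l1 l2).

Definition switch_sem (U V : 'M[C]_4) (f : st) : st := fun c p k =>
  sem (UG V) (sem (UG U) (fun c p k => f (upd c l b) p k)) c p k +
  sem (UG U) (sem (UG V) (fun c p k => f (upd c l (~~ b)) p k)) c p k.

(* Only the branch l = ~~ b, which runs the unitary V before U, gets a
   non-zero input. *)
Definition switch_input : st := fun c p k =>
  if c l == b then 0 else st_of_mx l1 l2 (delta_mx 0 0) c p k.

Lemma supported_switch_input : supported G switch_input.
Proof.
move=> c c' p p' k k' hc hq; rewrite /switch_input /st_of_mx /idx.
have -> : c l = c' l by apply: hc; rewrite extend1 eqxx.
have [-> ->] : p l1 = p' l1 /\ k l1 = k' l1.
  by apply: hq; rewrite extend1 eq_sym (negbTE nl1) ThetaE eqxx.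
have [-> ->] : p l2 = p' l2 /\ k l2 = k' l2.
  by apply: hq; rewrite extend1 eq_sym (negbTE nl2) ThetaE eqxx orbT.
by [].
Qed.

Lemma herm_switch_input : herm switch_input.
Proof.
move=> c p k; rewrite /switch_input; case: (c l == b); first by rewrite conjC0.
by rewrite /st_of_mx !mxE conjC_nat andbC.
Qed.

Lemma switch_semE U V :
  switch_sem U V switch_input = st_of_mx l1 l2 (U *m (V *m delta_mx 0 0 *m V^t*) *m U^t*).
Proof.
rewrite /switch_sem.
have -> : (fun c p k => switch_input (upd c l b) p k) = st_of_mx l1 l2 0.
  do 3!apply: functional_extensionality => ?.
  by rewrite /switch_input /upd eqxx eqxx /st_of_mx mxE.
have -> : (fun c p k => switch_input (upd c l (~~ b)) p k) = st_of_mx l1 l2 (delta_mx 0 0).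
  do 3!apply: functional_extensionality => ?.
  by rewrite /switch_input /upd eqxx; case: b.
rewrite !sem_UGate_st_of_mx // mulmx0 mul0mx mulmx0 mul0mx.
by do 3!apply: functional_extensionality => ?; rewrite {1}/st_of_mx mxE add0r.
Qed.

Lemma switch_not_factoring : hole1_factors l1 l2 G K ->
  ~ (forall U V, unitary U -> unitary V -> forall f, supported G f ->
       forall c p k, sem (fill K (UG U) (UG V)) f c p k = switch_sem U V f c p k).
Proof.
move=> fK eK.
have [s [ss hs eKs]] := fK _ supported_switch_input herm_switch_input.
have [W [V [uW uV WsW moved]]] :=
  commuting_unitary_moving_pure_state (herm_mx_of_st l1 l2 hs).
have unitary1 : (1%:M : 'M[C]_4) \is unitarymx.
  by apply/unitarymxP; rewrite trmx1 map_mx1 mulmx1.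
apply: (negP moved); apply/eqP/(st_of_mx_inj n12).
have X1 : V *m delta_mx 0 0 *m V^t* = 1%:M *m (V *m delta_mx 0 0 *m V^t*) *m 1%:M^t*.
  by rewrite mul1mx trmx1 map_mx1 mulmx1.
rewrite [in RHS]X1 -!switch_semE.
have e1 : sem (UG 1%:M) s = sem (UG W) s.
  by rewrite (mx_of_stK ss) !sem_UGate_st_of_mx // mul1mx trmx1 map_mx1 mulmx1 WsW.
do 3!apply: functional_extensionality => ?.
rewrite -!eK ?(eKs _ _ e1) //; by [apply: unitarymx_unitary | apply: supported_switch_input].
Qed.

End Switch.

Theorem mainTheorem2 (l l1 l2 : nat) (K : circ) :
  uniq [:: l; l1; l2] ->
  typed l1 l2 (extend (Theta l1 l2) [:: l] [:: Bit]) K (Theta l1 l2) ->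
  approx l1 l2 (extend (Theta l1 l2) [:: l] [:: Bit]) K (Dswitch l) ->
  (1 < count1 K)%N \/ (1 < count2 K)%N.
Proof.
rewrite /= !inE negb_or => /and3P[/andP[nl1 nl2] n12 _] ty ap.
case: (ltnP 1 (count1 K)) => [|c1]; first by left.
case: (ltnP 1 (count2 K)) => [|c2]; first by right.
exfalso; have [fK|fK] := factors_or_swapped ty c1 c2.
- apply: (switch_not_factoring (b := true) nl1 nl2 n12 fK) => U V uU uV f hf c p k.
  exact: ap.
- apply: (switch_not_factoring (b := false) nl1 nl2 n12 fK) => U V uU uV f hf c p k.
  by rewrite fill_swap_holes (ap V U uV uU f hf c p k) /= addrC.
Qed.
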